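(* Let $\xi$ be a highest $\ell_{\mathbf s}$-weight vector of highest $\ell_{\mathbf s}$-weight $\boldsymbol\lambda(u)=(\lambda_i(u))_{1\le i\le\kappa}$ in a representation of the super Yangian $\mathscr Y_{\mathbf s}$. Then for each $1\le i\le\kappa$, $$t'_{ii}(u)\,\xi=\lambda_i'(u)\,\xi,\qquad \lambda_i'(u)=\frac{1}{\lambda_{i}(u+\rho_{i+1})}\prod_{k=i+1}^{\kappa} \frac{\lambda_k(u+\rho_k)}{\lambda_{k}(u+\rho_{k+1})}.$$
   Context: Fix integers $m,n\ge 0$ and put $\kappa=m+n$. A parity sequence is $\mathbf s=(s_1,\dots,s_\kappa)\in\{\pm1\}^\kappa$ with exactly $m$ entries equal to $1$; write $|i|\in\mathbb Z_2$ with $s_i=(-1)^{|i|}$. Let $V=\mathbb C^{m|n}$ have basis $v_1,\dots,v_\kappa$ with $v_i$ of parity $|i|$, and let $E_{ij}\in\mathrm{End}(V)$ be the matrix units. The super Yangian $\mathscr Y_{\mathbf s}$ is the unital associative superalgebra generated by $t_{ij}^{(r)}$ ($1\le i,j\le\kappa$, $r\ge1$) of parity $|i|+|j|$ with defining relations $[t_{ij}(u),t_{kl}(v)]=\frac{(-1)^{|i||j|+|i||k|+|j||k|}}{u-v}\big(t_{kj}(u)t_{il}(v)-t_{kj}(v)t_{il}(u)\big)$ (supercommutator), where $t_{ij}(u)=\delta_{ij}+\sum_{r\ge1}t_{ij}^{(r)}u^{-r}$. Put $T(u)=\sum_{i,j}(-1)^{|i||j|+|j|}t_{ij}(u)\otimes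 E_{ij}$ and define the series $t'_{ij}(u)$ by $T(u)^{-1}=\sum_{i,j}(-1)^{|i||j|+|j|}t'_{ij}(u)\otimes E_{ij}$. A nonzero vector $\xi$ in a $\mathscr Y_{\mathbf s}$-module is a highest $\ell_{\mathbf s}$-weight vector of highest $\ell_{\mathbf s}$-weight $\boldsymbol\lambda(u)$ if $t_{ij}(u)\xi=0$ for $1\le i<j\le\kappa$ and $t_{ii}(u)\xi=\lambda_i(u)\xi$ with $\lambda_i(u)\in1+u^{-1}\mathbb C[[u^{-1}]]$. Put $\rho_k=\sum_{a=k}^\kappa s_a$ for $1\le k\le\kappa$, and $\rho_{\kappa+1}=0$. *)

From HB Require Import structures.
From mathcomp Require Import all_boot all_order all_algebra complex.
From mathcomp Require Import Rstruct.
Set Implicit Arguments.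
Unset Strict Implicit.
Unset Printing Implicit Defensive.
Import Order.TTheory GRing.Theory Num.Theory.
Local Open Scope ring_scope.

Definition C : numClosedFieldType := (Rdefinitions.R)[i]%C.

(** * Formal power series in u^{-1}, given by their coefficient sequences:
    f : nat -> K  represents  sum_{r >= 0} f r * u^{-r}. *)
Section PowerSeries.
Variable K : fieldType.
Definition ps := nat -> K.

Definition ps_one : ps := fun n => (n == 0%N)%:R.

Definition ps_mul (f g : ps) : ps :=
  fun n => \sum_(k < n.+1) f k * g (n - k)%N.

(* inverse of a series with invertible constant term (fuel = n suffices) *)
Fixpoint ps_inv_aux (fuel : nat) (f : ps) (n : nat) : K :=
  match fuel with
  | 0 => (f 0%N)^-1
  | fu.+1 =>
      if n is 0 then (f 0%N)^-1
      else - (f 0%N)^-1 * \sum_(k < n) f k.+1 * ps_inv_aux fu f (n - k.+1)%N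
  end.
Definition ps_inv (f : ps) : ps := fun n => ps_inv_aux n f n.

(* the series f(u + a): (u+a)^{-r} = sum_{m>=0} binom(-r,m) a^m u^{-r-m},
   so the coefficient of u^{-n} is sum_{r<=n} f_r (-1)^{n-r} C(n-1,n-r) a^{n-r} *)
Definition ps_shift (a : K) (f : ps) : ps :=
  fun n => \sum_(r < n.+1)
      f r * ((-1) ^+ (n - r) * ('C(n.-1, n - r))%:R * a ^+ (n - r)).
End PowerSeries.

(** * Super Yangian data.
    kappa = m + n; the parity sequence is encoded by p : 'I_kappa -> bool,
    p i = |i|, s_i = (-1)^{|i|}.  Indices are 0-based: i : 'I_kappa stands
    for the paper's index i+1.
    A representation is a K-vector space M together with the actions
    t r i j : M -> M of the generators t_{ij}^{(r+1)} (r >= 0). *)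
Section SuperYangian.
Variable K : fieldType.
Variable kappa : nat.
Variable p : 'I_kappa -> bool.
Variable M : lmodType K.
Variable t : nat -> 'I_kappa -> 'I_kappa -> M -> M.

Definition sgn (b : bool) : K := (-1) ^+ b.

Definition tc (r : nat) (i j : 'I_kappa) (v : M) : M :=
  if r is r'.+1 then t r' i j v else (if i == j then v else 0).

Definition scomm (a : M -> M) (pa : bool) (b : M -> M) (pb : bool) (v : M) : M :=
  a (b v) - sgn (pa && pb) *: b (a v).

(* The defining relations
   [t_ij(u), t_kl(v)] = (-1)^{|i||j|+|i||k|+|j||k|}/(u-v) (t_kj(u)t_il(v) - t_kj(v)t_il(u)),
   written, after multiplying by (u - v), coefficientwise:
   [t_ij^{(r+1)}, t_kl^{(s)}] - [t_ij^{(r)}, t_kl^{(s+1)}]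
      = (-1)^{...} (t_kj^{(r)} t_il^{(s)} - t_kj^{(s)} t_il^{(r)}),  r, s >= 0. *)
Definition is_rep : Prop :=
  (forall r i j (a : K) (v w : M), t r i j (a *: v + w) = a *: t r i j v + t r i j w)
  /\ (forall (r s : nat) (i j k l : 'I_kappa) (v : M),
        scomm (tc r.+1 i j) (p i (+) p j) (tc s k l) (p k (+) p l) v
        - scomm (tc r i j) (p i (+) p j) (tc s.+1 k l) (p k (+) p l) v
        = sgn ((p i && p j) (+) (p i && p k) (+) (p j && p k))
            *: (tc r k j (tc s i l v) - tc s k j (tc r i l v))).

(* T(u) = sum_{ij} (-1)^{|i||j|+|j|} t_ij(u) (x) E_ij ; the matrix entry of
   T(u) at (i,j) is A_ij(u) = sigma i j * t_ij(u). *)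
Definition sigma (i j : 'I_kappa) : K := sgn ((p i && p j) (+) p j).

(* Sign in the (super) tensor product Y (x) End(V):
   (a (x) E_ij)(b (x) E_jl) = (-1)^{|b| (|i|+|j|)} ab (x) E_il, with |b| = |j|+|l|. *)
Definition eps (i j l : 'I_kappa) : K := sgn ((p j (+) p l) && (p i (+) p j)).

(* Coefficients B^{(r)} of the matrix of T(u)^{-1} (acting on M), determined
   by T(u) T(u)^{-1} = 1, i.e. B^{(0)} = 1 and for r >= 1
   sum_{s=0}^{r} sum_j eps i j l A^{(s)}_ij B^{(r-s)}_jl = 0. *)
Fixpoint Binv_aux (fuel r : nat) (i l : 'I_kappa) (v : M) : M :=
  match fuel with
  | 0 => if i == l then v else 0
  | f.+1 =>
      if r is 0 then (if i == l then v else 0)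
      else - \sum_(s < r) \sum_(j < kappa)
               eps i j l *: (sigma i j *: tc s.+1 i j (Binv_aux f (r - s.+1) j l v))
  end.
Definition Binv (r : nat) (i l : 'I_kappa) (v : M) : M := Binv_aux r r i l v.

(* T(u)^{-1} = sum_{ij} (-1)^{|i||j|+|j|} t'_ij(u) (x) E_ij :
   tprime r i j is the action of the coefficient t'_ij^{(r)} (r >= 0). *)
Definition tprime (r : nat) (i j : 'I_kappa) (v : M) : M := sigma i j *: Binv r i j v.

(* highest l_s-weight vector of highest l_s-weight lam; lam i is the
   coefficient sequence of lambda_i(u) in 1 + u^{-1} K[[u^{-1}]] *)
Definition is_highest_weight (xi : M) (lam : 'I_kappa -> ps K) : Prop :=
  [/\ xi != 0,
      forall i, lam i 0%N = 1,
      forall r (i j : 'I_kappa), (i < j)%N -> t r i j xi = 0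
    & forall r (i : 'I_kappa), t r i i xi = lam i r.+1 *: xi].
End SuperYangian.

(* rho k (0-based) = sum_{a >= k} s_a; this is the paper's rho_{k+1};
   rho kappa = 0 *)
Definition rho (K : fieldType) (kappa : nat) (p : 'I_kappa -> bool) (k : nat) : K :=
  \sum_(a < kappa | (k <= a)%N) sgn K (p a).

Definition lam_prime (K : fieldType) (kappa : nat) (p : 'I_kappa -> bool)
    (lam : 'I_kappa -> ps K) (i : 'I_kappa) : ps K :=
  ps_mul (ps_inv (ps_shift (@rho K kappa p i.+1) (lam i)))
    (foldr (@ps_mul K) (ps_one K)
       (map (fun k : 'I_kappa => ps_mul (ps_shift (@rho K kappa p k) (lam k))
                                  (ps_inv (ps_shift (@rho K kappa p k.+1) (lam k))))
            (filter (fun k : 'I_kappa => (i < k)%N) (enum 'I_kappa)))).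

(* The coefficients t'_ij of T(u)^{-1} are defined by T(u) T(u)^{-1} = 1, from
   which T(u)^{-1} T(u) = 1 follows; conjugating the defining relations by
   T(v)^{-1} gives
     (u - v) [t_ij(u), t'_ab(v)] = +-(d_ib sum_k t'_ak(v) t_kj(u) - d_aj sum_l t_il(u) t'_lb(v)).
   On the highest weight vector xi this first forces t'_ab(u) xi = 0 for a < b.
   Then, for f = i + 1 and c = rho_f, the vectors
     D(u, v) = (T(u) T(v)^{-1})_ii xi - (T(u) T(v)^{-1})_ff xi,
     E(u, v) = t_ii(u) t'_ii(v) xi - lambda_f(u) t'_ff(v) xi
   satisfy (u - v - c) D = (u - v) E, and the substitution u = v + c yields
   t_ii(v + c) t'_ii(v) xi = lambda_f(v + c) t'_ff(v) xi.  As t_ii(v + c) acts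
   triangularly with eigenvalue lambda_i(v + c) on xi, this determines t'_ii(v) xi
   from t'_ff(v) xi, and descending induction from t'_kk(u) xi = lambda_k(u)^{-1} xi
   (k the last index) gives the formula. *)

From HB Require Import structures.
From mathcomp Require Import all_boot all_order all_algebra complex.
From mathcomp Require Import Rstruct.
From mathcomp Require Import zify.
From Stdlib Require Import FunctionalExtensionality.
Set Implicit Arguments.
Unset Strict Implicit.
Unset Printing Implicit Defensive.
Import GRing.Theory.
Local Open Scope ring_scope.

Section TriangularSums.
Variable V : nmodType.

Lemma sum_triangle n (A : nat -> nat -> V) :
  \sum_(m < n.+1) \sum_(s < (n - m)%N.+1) A m s =
  \sum_(k < n.+1) \sum_(m < k.+1) A m (k - m)%N.
Proof.
elim: n => [|n IH]; first by rewrite !big_ord_recl !big_ord0.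
rewrite big_ord_recr [RHS]big_ord_recr /= -IH subnn big_ord1.
rewrite [X in _ = _ + X]big_ord_recr /= subnn.
rewrite (eq_bigr (fun i : 'I_n.+1 =>
  \sum_(s < (n - i)%N.+1) A i s + A i (n - i)%N.+1)); last first.
  by move=> i _; rewrite subSn ?big_ord_recr // -ltnS.
rewrite big_split /= -!addrA; congr (_ + _); congr (_ + _).
by apply: eq_bigr => i _; rewrite subSn // -ltnS.
Qed.

Lemma sum_triangle3 n (H : nat -> nat -> nat -> V) :
  \sum_(m < n.+1) \sum_(s < (n - m)%N.+1) H m s (n - m - s)%N =
  \sum_(k < n.+1) \sum_(m < k.+1) H m (k - m)%N (n - k)%N.
Proof.
rewrite (sum_triangle n (fun m s => H m s (n - m - s)%N)).
apply: eq_bigr => k _; apply: eq_bigr => m _.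
have := ltn_ord k; have := ltn_ord m; move=> hm hk.
by congr (H _ _ _); lia.
Qed.

Lemma sum_ord_rev m (G : nat -> nat -> V) :
  \sum_(k < m.+1) G k (m - k)%N = \sum_(k < m.+1) G (m - k)%N k.
Proof.
rewrite (reindex_inj rev_ord_inj) /=; apply: eq_bigr => k _.
by rewrite subSS subKn // -ltnS.
Qed.

Lemma sum_triangle_swap N (H : nat -> nat -> V) :
  \sum_(k < N.+1) \sum_(s < (N - k)%N.+1) H k s =
  \sum_(s < N.+1) \sum_(k < (N - s)%N.+1) H k s.
Proof.
rewrite (sum_triangle N H) (sum_triangle N (fun s k => H k s)).
by apply: eq_bigr => m _; apply: (sum_ord_rev m H).
Qed.

End TriangularSums.

Lemma subrACB (V : zmodType) (a b c d : V) : (a - b) - (c - d) = (a - c) - (b - d).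
Proof. by rewrite opprD addrACA -opprD. Qed.

Lemma sum_if_eqr (I : finType) (V : nmodType) (F : I -> V) i :
  \sum_j (if j == i then F j else 0) = F i.
Proof. by rewrite -big_mkcond big_pred1_eq. Qed.

Lemma sum_if_eql (I : finType) (V : nmodType) (F : I -> V) i :
  \sum_j (if i == j then F j else 0) = F i.
Proof. by rewrite -(sum_if_eqr F); apply: eq_bigr => j _; rewrite eq_sym. Qed.

Lemma hockey_stick r d : (\sum_(j < d.+1) 'C((r + j).-1, j) = 'C(r + d, d))%N.
Proof.
elim: d => [|d IH]; first by rewrite big_ord1 !bin0.
by rewrite big_ord_recr /= IH !addnS binS addnC.
Qed.

Section PowerSeriesAlgebra.
Variable K : fieldType.
Implicit Types f g h : ps K.

Lemma ps_mulC f g : ps_mul f g = ps_mul g f.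
Proof.
apply: functional_extensionality => n; rewrite /ps_mul.
by rewrite (sum_ord_rev n (fun a b => f a * g b)); apply: eq_bigr => k _; rewrite mulrC.
Qed.

Lemma ps_mulA f g h : ps_mul f (ps_mul g h) = ps_mul (ps_mul f g) h.
Proof.
apply: functional_extensionality => n; rewrite /ps_mul.
under eq_bigr do rewrite mulr_sumr.
rewrite (sum_triangle3 n (fun a b c => f a * (g b * h c))).
by apply: eq_bigr => k _; rewrite mulr_suml; apply: eq_bigr => j _; rewrite mulrA.
Qed.

Lemma ps_mulr1 f : ps_mul f (ps_one K) = f.
Proof.
apply: functional_extensionality => n.
rewrite /ps_mul big_ord_recr /= subnn /ps_one eqxx mulr1 big1 ?add0r // => k _.
by rewrite subn_eq0 leqNgt ltn_ord mulr0.
Qed.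

Lemma ps_inv_auxE fuel f n : (n <= fuel)%N -> ps_inv_aux fuel f n = ps_inv f n.
Proof.
rewrite /ps_inv; suff H fu fu' m : (m <= fu)%N -> (m <= fu')%N ->
    ps_inv_aux fu f m = ps_inv_aux fu' f m by move=> h; apply: H.
elim: fu fu' m => [|fu IH] [|fu'] [|m] h h' //=.
congr (_ * _); apply: eq_bigr => k _; rewrite (IH fu') // subSS.
all: exact: leq_trans (leq_subr _ _) _.
Qed.

Lemma ps_mulrV f : f 0%N != 0 -> ps_mul f (ps_inv f) = ps_one K.
Proof.
move=> f0; apply: functional_extensionality => -[|n]; rewrite /ps_mul /ps_one.
  by rewrite big_ord1 /ps_inv /= mulfV.
rewrite big_ord_recl /= subn0 /ps_inv /= mulrA mulrN mulfV // mulN1r addrC.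
apply/eqP; rewrite subr_eq0; apply/eqP; apply: eq_bigr => k _.
by rewrite subSS [in RHS]ps_inv_auxE ?leq_subr.
Qed.

Lemma ps_shift0 f : ps_shift 0 f = f.
Proof.
apply: functional_extensionality => n.
rewrite /ps_shift big_ord_recr /= subnn expr0 mul1r bin0 mulr1n expr0 !mulr1.
rewrite big1 ?add0r // => k _.
by rewrite expr0n subn_eq0 leqNgt ltn_ord /= !mulr0.
Qed.

Lemma ps_shift_coef0 a f : ps_shift a f 0%N = f 0%N.
Proof. by rewrite /ps_shift big_ord1 /= expr0 mul1r bin0 mulr1n !mulr1. Qed.

End PowerSeriesAlgebra.

(* Series in two variables are coefficient functions [F r n] of u^{-r} v^{-n}.
   [shift_coef k r] is the coefficient of v^{-k} in (v + c)^{-r} (for r <= k),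
   so that [subst_shift F N] is the coefficient of v^{-N} in F(v + c, v). *)
Section ShiftSubstitution.
Variables (K : fieldType) (M : lmodType K) (c : K).

Definition shift_coef (k r : nat) : K := (- c) ^+ (k - r) * ('C(k.-1, k - r))%:R.

Definition subst_shift (F : nat -> nat -> M) N :=
  \sum_(s < N.+1) \sum_(r < (N - s)%N.+1) shift_coef (N - s) r *: F r s.

Definition umul (F : nat -> nat -> M) r n := if r is r'.+1 then F r' n else 0.
Definition vmul (F : nat -> nat -> M) r n := if n is n'.+1 then F r n' else 0.
Definition vmul1 (w : nat -> M) N := if N is N'.+1 then w N' else 0.

(* the coefficients of (v + c)^{-1} *)
Definition inv_shift k : K := if k is k'.+1 then (- c) ^+ k' else 0.

Definition conv (a : nat -> K) (w : nat -> M) N := \sum_(k < N.+1) a k *: w (N - k)%N.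

Lemma ps_shiftE f n : ps_shift c f n = \sum_(r < n.+1) f r * shift_coef n r.
Proof.
apply: eq_bigr => r _; congr (_ * _).
by rewrite /shift_coef [(- c) ^+ _]exprNn -!mulrA; congr (_ * _); rewrite mulrC.
Qed.

Lemma subst_shift_vmul F N : subst_shift (vmul F) N = vmul1 (subst_shift F) N.
Proof.
rewrite /subst_shift; case: N => [|N] /=.
  by rewrite big_ord1 big1 // => r _; rewrite scaler0.
rewrite big_ord_recl /= big1 ?add0r; last by move=> r _; rewrite scaler0.
by apply: eq_bigr => s _; rewrite subSS.
Qed.

Lemma sum_inv_shift_coef N r : (r < N)%N ->
  \sum_(k < (N - r)%N.+1) inv_shift k * shift_coef (N - k) r = shift_coef N r.+1.
Proof.
move=> ltrN; rewrite big_ord_recl /= mul0r add0r.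
set d := (N - r.+1)%N.
have defN : N = (r + d).+1 by rewrite /d; lia.
have -> : (N - r)%N = d.+1 by rewrite defN; lia.
rewrite (eq_bigr (fun k : 'I_d.+1 => (- c) ^+ d * ('C((r + (d - k)).-1, d - k))%:R));
  last first.
  move=> k _; rewrite /inv_shift /shift_coef mulrA -exprD.
  by have := ltn_ord k; rewrite /bump /= => hk; congr (_ ^+ _ * ('C(_, _))%:R); lia.
rewrite -mulr_sumr (sum_ord_rev d (fun k j => ('C((r + j).-1, j))%:R : K)).
rewrite -natr_sum hockey_stick /shift_coef defN.
by congr (_ ^+ _ * ('C(_, _))%:R); lia.
Qed.

Lemma subst_shift_umul F N : subst_shift (umul F) N = conv inv_shift (subst_shift F) N.
Proof.
rewrite /subst_shift /conv.
transitivity (\sum_(s < N.+1) \sum_(r < (N - s)%N) shift_coef (N - s) r.+1 *: F r s).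
  by apply: eq_bigr => s _; rewrite big_ord_recl /= scaler0 add0r.
transitivity (\sum_(k < N.+1) \sum_(s < (N - k)%N.+1) \sum_(r < (N - s - k)%N.+1)
    (inv_shift k * shift_coef (N - s - k) r) *: F r s); last first.
  apply: eq_bigr => k _; rewrite scaler_sumr; apply: eq_bigr => s _.
  by rewrite scaler_sumr subnAC; apply: eq_bigr => r _; rewrite scalerA.
rewrite (sum_triangle_swap N
  (fun k s => \sum_(r < (N - s - k)%N.+1) (inv_shift k * shift_coef (N - s - k) r) *: F r s)).
apply: eq_bigr => s _.
rewrite (sum_triangle_swap (N - s) (fun k r => (inv_shift k * shift_coef (N - s - k) r) *: F r s)).
rewrite big_ord_recr /= subnn big_ord1 /= mul0r scale0r addr0.
by apply: eq_bigr => r _; rewrite -scaler_suml sum_inv_shift_coef.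
Qed.

(* the partial fraction identity v^{-1} - (v + c)^{-1} = c (v + c)^{-1} v^{-1} *)
Lemma vmul1_sub_conv_inv_shift w N :
  vmul1 w N - conv inv_shift w N = c *: conv inv_shift (vmul1 w) N.
Proof.
rewrite /conv; case: N => [|N]; first by rewrite /= !big_ord1 /= !scale0r subr0 scaler0.
rewrite [X in _ - X]big_ord_recl [X in c *: X]big_ord_recl /= !scale0r !add0r.
rewrite big_ord_recl /= expr0 scale1r subSS subn0 opprD addrA subrr add0r.
rewrite [X in _ = c *: X]big_ord_recr /= subnn /= scaler0 addr0.
rewrite -sumrN scaler_sumr; apply: eq_bigr => k _; rewrite !subSS.
have -> : (N - k)%N = (N - k.+1)%N.+1 by have := ltn_ord k; rewrite /bump /=; lia.
by rewrite /= scalerA exprS mulNr scaleNr opprK.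
Qed.

Lemma conv_inv_shift_vmul1_eq0 w :
  (forall N, conv inv_shift (vmul1 w) N = 0) -> forall n, w n = 0.
Proof.
move=> w0; elim/ltn_ind => n IH; have := w0 n.+2.
rewrite /conv big_ord_recl /= scale0r add0r big_ord_recl /= expr0 scale1r.
rewrite [X in _ + X = _ -> _]big1 ?addr0 // => k _; rewrite !subSS /=.
case e : (n - k)%N => [|m] /=; first by rewrite scaler0.
by rewrite IH ?scaler0 //; lia.
Qed.

Lemma subst_shiftB F G N :
  subst_shift (fun r n => F r n - G r n) N = subst_shift F N - subst_shift G N.
Proof.
rewrite /subst_shift -sumrB; apply: eq_bigr => s _.
by rewrite -sumrB; apply: eq_bigr => r _; rewrite scalerBr.
Qed.

Lemma subst_shiftZ a F N : subst_shift (fun r n => a *: F r n) N = a *: subst_shift F N.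
Proof.
rewrite /subst_shift scaler_sumr; apply: eq_bigr => s _.
by rewrite scaler_sumr; apply: eq_bigr => r _; rewrite !scalerA mulrC.
Qed.

Lemma eq_subst_shift F G N : (forall r n, F r n = G r n) -> subst_shift F N = subst_shift G N.
Proof. by move=> FG; apply: eq_bigr => s _; apply: eq_bigr => r _; rewrite FG. Qed.

Lemma eq_conv a w1 w2 N : (forall n, w1 n = w2 n) -> conv a w1 N = conv a w2 N.
Proof. by move=> w12; apply: eq_bigr => k _; rewrite w12. Qed.

Lemma convB a w1 w2 N : conv a (fun n => w1 n - w2 n) N = conv a w1 N - conv a w2 N.
Proof. by rewrite /conv -sumrB; apply: eq_bigr => k _; rewrite scalerBr. Qed.

Lemma vmul1B w1 w2 N : vmul1 (fun n => w1 n - w2 n) N = vmul1 w1 N - vmul1 w2 N.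
Proof. by case: N => [|N] /=; rewrite ?subrr. Qed.

Section Recurrence.
Variables D E : nat -> nat -> M.
Hypothesis DE_rec :
  forall r n, (D r.+1 n - E r.+1 n) - (D r n.+1 - E r n.+1) = c *: D r n.
Hypothesis DE_0n : forall n, D 0%N n = E 0%N n.

(* (u - v) (D - E) = c D, i.e. (u - v - c) D = (u - v) E: put u = v + c. *)
Lemma subst_shift_eq0_neq0 :
  (forall r, D r 0%N = E r 0%N) -> c != 0 -> forall N, subst_shift E N = 0.
Proof.
move=> DE_r0 c_neq0.
pose F r n := D r n - E r n.
have recF r n : vmul F r n - umul F r n = c *: umul (vmul D) r n.
  case: r n => [|r] [|n] /=; rewrite ?subrr ?scaler0 //.
  - by rewrite /F DE_0n subrr subr0.
  - by rewrite /F DE_r0 subrr subrr.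
  - exact: DE_rec.
have substF N : vmul1 (subst_shift F) N - conv inv_shift (subst_shift F) N =
    c *: conv inv_shift (vmul1 (subst_shift D)) N.
  rewrite -subst_shift_vmul -subst_shift_umul -subst_shiftB.
  rewrite (@eq_conv _ (vmul1 (subst_shift D)) (subst_shift (vmul D))); last first.
    by move=> n; rewrite subst_shift_vmul.
  by rewrite -subst_shift_umul -subst_shiftZ; apply: eq_subst_shift.
have FD0 : forall n, subst_shift F n - subst_shift D n = 0.
  apply: conv_inv_shift_vmul1_eq0 => N; have /eqP := substF N.
  rewrite vmul1_sub_conv_inv_shift -subr_eq0 -scalerBr scaler_eq0 (negbTE c_neq0) /=.
  by rewrite -convB => /eqP <-; apply: eq_conv => n; rewrite vmul1B.
move=> N; rewrite (eq_subst_shift (G := fun r n => D r n - F r n)); last first.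
  by move=> r n; rewrite /F opprB addrC subrK.
by rewrite subst_shiftB; apply/eqP; rewrite subr_eq0 eq_sym -subr_eq0 FD0.
Qed.

(* For c = 0 the recurrence only says D = E, so D(v, v) = 0 has to be assumed. *)
Lemma subst_shift_eq0_0 : c = 0 ->
  (forall N, \sum_(r < N.+1) D r (N - r)%N = 0) -> forall N, subst_shift E N = 0.
Proof.
move=> c0 D_diag0.
have DE r n : D r n = E r n.
  elim: r n => [|r IH] n; first exact: DE_0n.
  have /eqP := DE_rec r n; rewrite c0 scale0r -(IH n.+1) subrr subr0 subr_eq0.
  by move/eqP.
move=> N; rewrite -(D_diag0 N) -(sum_ord_rev N (fun a b => D b a)) /subst_shift.
apply: eq_bigr => s _; rewrite big_ord_recr /= big1 ?add0r.
  by rewrite /shift_coef subnn expr0 bin0 mul1r scale1r DE.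
move=> r _; rewrite /shift_coef c0 oppr0 expr0n.
have ltrN := ltn_ord r.
by rewrite (_ : (N - s - r == 0)%N = false) ?mul0r ?scale0r //; lia.
Qed.

Lemma subst_shift_eq0 :
  (forall r, D r 0%N = E r 0%N) -> (forall N, \sum_(r < N.+1) D r (N - r)%N = 0) ->
  forall N, subst_shift E N = 0.
Proof.
move=> DE_r0 D_diag0; have [c0|c_neq0] := eqVneq c 0.
  exact: subst_shift_eq0_0.
exact: subst_shift_eq0_neq0.
Qed.

End Recurrence.
End ShiftSubstitution.

Section ConvolutionSolve.
Variables (K : fieldType) (M : lmodType K) (A : nat -> M -> M).
Hypothesis A_linear : forall m, linear (A m).
HB.instance Definition _ m := GRing.isLinear.Build K M M *:%R (A m) (A_linear m).

(* A 0 = id makes the system triangular, so its solution is unique. *)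
Lemma conv_solve_eigen (a b : ps K) (g : nat -> M) (x : M) :
  (forall v, A 0%N v = v) -> (forall m, A m x = a m *: x) -> a 0%N = 1 ->
  (forall N, \sum_(s < N.+1) A (N - s)%N (g s) = b N *: x) ->
  forall n, g n = ps_mul (ps_inv a) b n *: x.
Proof.
move=> A0 Ax a0 Ag.
set mu := ps_mul (ps_inv a) b.
have a_mu : ps_mul a mu = b by rewrite /mu ps_mulA ps_mulrV ?a0 ?oner_eq0 // ps_mulC ps_mulr1.
have A_mu N : \sum_(s < N.+1) A (N - s)%N (mu s *: x) = b N *: x.
  under eq_bigr do rewrite linearZ /= Ax scalerA.
  rewrite -scaler_suml -a_mu /ps_mul (sum_ord_rev N (fun u w => a u * mu w)).
  by congr (_ *: _); apply: eq_bigr => k _; rewrite mulrC.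
pose h n := g n - mu n *: x.
have A_h N : \sum_(s < N.+1) A (N - s)%N (h s) = 0.
  by under eq_bigr do rewrite linearB; rewrite sumrB Ag A_mu subrr.
suff h0 n : h n = 0 by move=> n; apply/eqP; rewrite -subr_eq0; apply/eqP; exact: h0.
elim/ltn_ind: n => n IH; have := A_h n; rewrite big_ord_recr /= subnn A0 big1 ?add0r //.
by move=> s _; rewrite IH ?linear0.
Qed.

End ConvolutionSolve.

Section LambdaPrime.
Variables (K : fieldType) (kappa : nat) (p : 'I_kappa -> bool) (lam : 'I_kappa -> ps K).

Lemma val_filter_gt i : (i < kappa)%N ->
  map val [seq k : 'I_kappa <- enum 'I_kappa | (i < k)%N] = iota i.+1 (kappa - i.+1).
Proof.
move=> ltik.
have -> : [seq k : 'I_kappa <- enum 'I_kappa | (i < k)%N] =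
  filter (preim val (fun x => i < x)%N) (enum 'I_kappa) by [].
rewrite -filter_map val_enum_ord.
rewrite -{1}(subnKC ltik) iotaD filter_cat add0n.
rewrite (eq_in_filter (a2 := pred0)); last first.
  by move=> x; rewrite mem_iota add0n ltnS => /andP [_ le_xi] /=; rewrite ltnNge le_xi.
rewrite filter_pred0 /=.
by apply/all_filterP/allP => x; rewrite mem_iota => /andP [].
Qed.

Lemma lam_primeS (i f : 'I_kappa) : f = i.+1 :> nat ->
  lam_prime p lam i = ps_mul (ps_inv (ps_shift (rho K p i.+1) (lam i)))
    (ps_mul (ps_shift (rho K p i.+1) (lam f)) (lam_prime p lam f)).
Proof.
move=> fE; rewrite /lam_prime.
have -> : [seq k : 'I_kappa <- enum 'I_kappa | (i < k)%N] = f :: [seq k : 'I_kappa <- enum 'I_kappa | (f < k)%N].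
  apply: (inj_map val_inj); rewrite /= !val_filter_gt ?ltn_ord // fE.
  have ltfk := ltn_ord f.
  by rewrite (_ : kappa - i.+1 = (kappa - i.+2).+1)%N //; lia.
by rewrite /= fE !ps_mulA.
Qed.

Lemma lam_prime_last (i : 'I_kappa) : i.+1 = kappa -> lam_prime p lam i = ps_inv (lam i).
Proof.
move=> iE; rewrite /lam_prime.
have -> : [seq k : 'I_kappa <- enum 'I_kappa | (i < k)%N] = [::].
  by apply: (inj_map val_inj); rewrite /= val_filter_gt ?ltn_ord // iE subnn.
have -> : rho K p i.+1 = 0 by rewrite /rho big_pred0 // => a; rewrite iE leqNgt ltn_ord.
by rewrite /= ps_shift0 ps_mulr1.
Qed.

End LambdaPrime.

Section SignRules.
Variable K : fieldType.
Local Notation sg := (sgn K).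

Lemma sgn_add a b : sg a * sg b = sg (a (+) b).
Proof. by case: a; case: b; rewrite /sgn /= ?expr0 ?expr1 ?mulN1r ?opprK ?mul1r. Qed.

Lemma sgnK a : sg a * sg a = 1.
Proof. by rewrite sgn_add addbb. Qed.

Lemma sgn_neq0 a : sg a != 0.
Proof. by case: a; rewrite /sgn /= ?expr0 ?expr1 ?oppr_eq0 oner_eq0. Qed.

Lemma sgn_andD q k l : sg (q && (k (+) l)) = sg (q && k) * sg (q && l).
Proof. by rewrite sgn_add; congr sg; case: q; case: k; case: l. Qed.

Lemma sgn_cancel pi pj pk :
  sg ((pi (+) pj) && pk) * sg ((pi && pj) (+) (pi && pk) (+) (pj && pk)) = sg (pi && pj).
Proof. by rewrite sgn_add; congr sg; case: pi; case: pj; case: pk. Qed.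

End SignRules.

Section Yangian.
Variables (K : fieldType) (kappa : nat) (p : 'I_kappa -> bool) (M : lmodType K)
  (t : nat -> 'I_kappa -> 'I_kappa -> M -> M).
Hypothesis t_rep : is_rep p t.
Local Notation T := (tc t).
Local Notation tp := (tprime p t).
Local Notation sg := (sgn K).

HB.instance Definition _ r i j := GRing.isLinear.Build K M M *:%R (t r i j) (t_rep.1 r i j).

Lemma tc_linear r i j : linear (T r i j).
Proof.
case: r => [|r] a v w /=; first by case: eqP => _ //; rewrite scaler0 addr0.
exact: linearP.
Qed.
HB.instance Definition _ r i j := GRing.isLinear.Build K M M *:%R (T r i j) (tc_linear r i j).

Lemma Binv_aux_linear fuel r i l : linear (Binv_aux p t fuel r i l).
Proof.
elim: fuel r i l => [|fuel IH] r i l a v w /=.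
  by case: eqP => _ //; rewrite scaler0 addr0.
case: r => [|r]; first by case: eqP => _ //; rewrite scaler0 addr0.
rewrite scalerN -opprD scaler_sumr -big_split; congr (- _); apply: eq_bigr => s _.
rewrite scaler_sumr -big_split; apply: eq_bigr => j _.
rewrite IH linearP !scalerDr !scalerA.
by congr (_ + _); rewrite mulrC mulrA (mulrC a).
Qed.

Lemma tprime_linear r i j : linear (tp r i j).
Proof.
move=> a v w; rewrite /tprime /Binv Binv_aux_linear scalerDr !scalerA.
by rewrite [a * _]mulrC.
Qed.
HB.instance Definition _ r i j := GRing.isLinear.Build K M M *:%R (tp r i j) (tprime_linear r i j).
Arguments tprime : simpl never.

Lemma Binv_auxE fuel r i l v : (r <= fuel)%N -> Binv_aux p t fuel r i l v = Binv p t r i l v.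
Proof.
rewrite /Binv; suff H f f' r' i' : (r' <= f)%N -> (r' <= f')%N ->
    Binv_aux p t f r' i' l v = Binv_aux p t f' r' i' l v by move=> h; apply: H.
elim: f f' r' i' => [|f IH] [|f'] [|r'] i' h h' //=.
congr (- _); apply: eq_bigr => s _; apply: eq_bigr => j _.
by rewrite (IH f') // subSS; apply: leq_trans (leq_subr _ _) _.
Qed.

Lemma sigma_diag i : sigma K p i i = 1.
Proof. by rewrite /sigma andbb addbb /sgn expr0. Qed.

Lemma tprime0 i l v : tp 0 i l v = if i == l then v else 0.
Proof.
by rewrite /tprime /Binv /=; case: eqP => [->|_]; rewrite ?sigma_diag ?scale1r ?scaler0.
Qed.

(* the signs sigma of T(u), of T(u)^{-1} and eps of the super tensor product cancel *)
Lemma tprimeS r i l v :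
  tp r.+1 i l v = - \sum_(s < r.+1) \sum_j T s.+1 i j (tp (r - s)%N j l v).
Proof.
rewrite {1}/tprime /Binv /= scalerN scaler_sumr; congr (- _).
apply: eq_bigr => s _; rewrite scaler_sumr; apply: eq_bigr => j _.
rewrite subSS Binv_auxE ?leq_subr // /tprime [in RHS]linearZ /= !scalerA; congr (_ *: _).
by rewrite /eps /sigma !sgn_add; congr sg; case: (p i); case: (p j); case: (p l).
Qed.

Lemma tc_tprime_inv n i l v :
  \sum_(s < n.+1) \sum_j T s i j (tp (n - s)%N j l v) = if (n == 0%N) && (i == l) then v else 0.
Proof.
rewrite big_ord_recl /= subn0 sum_if_eql.
case: n => [|n]; first by rewrite big_ord0 addr0 tprime0.
by rewrite tprimeS addrC; apply/eqP; rewrite subr_eq0.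
Qed.

Lemma tc_tprime_tc N i l v :
  \sum_(m < N.+1) \sum_b T m i b
    (\sum_(s < (N - m)%N.+1) \sum_k tp s b k (T (N - m - s)%N k l v)) = T N i l v.
Proof.
under eq_bigr do under eq_bigr do rewrite linear_sum.
under eq_bigr do rewrite exchange_big /=.
under eq_bigr do under eq_bigr do under eq_bigr do rewrite linear_sum.
rewrite (sum_triangle3 N (fun m s q => \sum_b \sum_k T m i b (tp s b k (T q k l v)))).
have tc_tprime_k n (w : 'I_kappa -> M) :
    \sum_(m < n.+1) \sum_b \sum_k T m i b (tp (n - m)%N b k (w k)) = if n == 0%N then w i else 0.
  under eq_bigr do rewrite exchange_big /=.
  rewrite exchange_big /=; under eq_bigr do rewrite tc_tprime_inv.
  by case: (n == 0%N); rewrite ?sum_if_eql ?big1.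
under eq_bigr do rewrite (tc_tprime_k _ (fun k => T (N - _) k l v)).
by rewrite big_ord_recl /= subn0 big1 ?addr0.
Qed.

Lemma tprime_tc_inv n a l v :
  \sum_(s < n.+1) \sum_k tp s a k (T (n - s)%N k l v) = if (n == 0%N) && (a == l) then v else 0.
Proof.
pose defect n a := \sum_(s < n.+1) \sum_k tp s a k (T (n - s)%N k l v) -
  if (n == 0%N) && (a == l) then v else 0.
suff : defect n a = 0 by move/eqP; rewrite subr_eq0 => /eqP.
have tc_defect N i : \sum_(m < N.+1) \sum_b T m i b (defect (N - m)%N b) = 0.
  under eq_bigr do under eq_bigr do rewrite linearB.
  under eq_bigr do rewrite sumrB.
  rewrite sumrB tc_tprime_tc big_ord_recr /= subnn big1 ?add0r; last first.
    move=> m _; rewrite big1 // => b _.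
    by rewrite subn_eq0 leqNgt ltn_ord linear0.
  rewrite (eq_bigr (fun b => if b == l then T N i b v else 0)) ?sum_if_eqr ?subrr //.
  by move=> b _; case: (b == l); rewrite ?linear0.
elim/ltn_ind: n a => n IH a; have := tc_defect n a.
rewrite big_ord_recl /= subn0 sum_if_eql big1 ?addr0 // => m _.
rewrite big1 // => b _; rewrite IH ?linear0 //.
by rewrite /bump /=; have := ltn_ord m; lia.
Qed.

Lemma tprime_tc_inv_conv N a l (z : nat -> M) :
  \sum_(n1 < N.+1) \sum_(s < (N - n1)%N.+1) \sum_k tp n1 a k (T s k l (z (N - n1 - s)%N)) =
  if a == l then z N else 0.
Proof.
rewrite (sum_triangle3 N (fun n1 s q => \sum_k tp n1 a k (T s k l (z q)))).
rewrite big_ord_recl /= [X in _ + X]big1 ?addr0 => [|m _]; last first.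
  by rewrite tprime_tc_inv /bump leq0n.
by rewrite subn0 (tprime_tc_inv 0).
Qed.

Section CommutationRelation.
Variables (a b i j : 'I_kappa) (v : M).
Let pij := p i (+) p j.
Let scomm_t r s (k l : 'I_kappa) w :=
  T r i j (T s k l w) - sg (pij && (p k (+) p l)) *: T s k l (T r i j w).
Let rel_rhs r s (k l : 'I_kappa) w := sg ((p i && p j) (+) (p i && p k) (+) (p j && p k)) *:
  (T r k j (T s i l w) - T s k j (T r i l w)).

Let scomm_t0 r k l w : scomm_t r 0 k l w = 0.
Proof.
rewrite /scomm_t /=; case: eqP => [->|_]; last by rewrite (linear0 (T r i j)) scaler0 subrr.
by rewrite addbb andbF /sgn expr0 scale1r subrr.
Qed.

(* [t_ij(u), t_kl(v)] T(v)^{-1}_{lb}, coefficientwise *)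
Let comm_r r N k := \sum_l \sum_(s < N.+1) scomm_t r s k l (tp (N - s)%N l b v).
Let rhs_r r N k := \sum_l \sum_(s < N.+1) rel_rhs r s k l (tp (N - s)%N l b v).

Let comm_r_rec r N k : comm_r r.+1 N k - comm_r r N.+1 k = rhs_r r N k.
Proof.
rewrite /comm_r /rhs_r -sumrB; apply: eq_bigr => l _.
rewrite [X in _ - X]big_ord_recl /= scomm_t0 add0r -sumrB; apply: eq_bigr => s _.
by rewrite subSS; apply: (t_rep.2 r s i j k l).
Qed.

Let comm_r0 r k : comm_r r 0 k = 0.
Proof. by rewrite /comm_r big1 // => l _; rewrite big_ord1 /= scomm_t0. Qed.

Let ck (k : 'I_kappa) := sg (pij && p a) * sg (pij && p k).

(* T(v)^{-1}_{ak} [t_ij(u), t_kl(v)] T(v)^{-1}_{lb}, coefficientwise *)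
Let comm_lr r N := \sum_k \sum_(n1 < N.+1) ck k *: tp n1 a k (comm_r r (N - n1)%N k).
Let rhs_lr r N := \sum_k \sum_(n1 < N.+1) ck k *: tp n1 a k (rhs_r r (N - n1)%N k).

Let comm_lr_rec r N : comm_lr r.+1 N - comm_lr r N.+1 = rhs_lr r N.
Proof.
rewrite /comm_lr /rhs_lr -sumrB; apply: eq_bigr => k _.
rewrite [X in _ - X]big_ord_recr /= subnn comm_r0 linear0 scaler0 addr0 -sumrB.
apply: eq_bigr => n1 _; rewrite -scalerBr -linearB subSn; last by rewrite -ltnS.
by rewrite comm_r_rec.
Qed.

Let comm_rE r N k : comm_r r N k = T r i j (if (N == 0%N) && (k == b) then v else 0) -
  sg (pij && p k) *: \sum_l sg (pij && p l) *:
     \sum_(s < N.+1) T s k l (T r i j (tp (N - s)%N l b v)).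
Proof.
rewrite /comm_r /scomm_t; under eq_bigr do rewrite sumrB.
rewrite sumrB; congr (_ - _).
  rewrite -(tc_tprime_inv N k b v) linear_sum exchange_big /=.
  by apply: eq_bigr => s _; rewrite linear_sum.
rewrite scaler_sumr; apply: eq_bigr => l _; rewrite !scaler_sumr; apply: eq_bigr => s _.
by rewrite scalerA sgn_andD.
Qed.

Let comm_lrE r N : comm_lr r N = ck b *: tp N a b (T r i j v) - T r i j (tp N a b v).
Proof.
rewrite /comm_lr; under eq_bigr do under eq_bigr do rewrite comm_rE linearB /= scalerBr.
under eq_bigr do rewrite sumrB.
rewrite sumrB; congr (_ - _).
  rewrite (bigD1 b) //= [X in _ + X]big1 => [|k /negbTE k_neq_b]; last first.
    by rewrite big1 // => n1 _; rewrite k_neq_b andbF !linear0.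
  rewrite big_ord_recr /= subnn eqxx /= big1 ?add0r ?addr0 // => n1 _.
  by rewrite subn_eq0 leqNgt ltn_ord /= !linear0.
under eq_bigr do under eq_bigr do rewrite [tp _ _ _ _]linearZ /= scalerA /ck -mulrA sgnK mulr1.
under eq_bigr do under eq_bigr do rewrite !linear_sum /=.
under eq_bigr do (under eq_bigr do under eq_bigr do rewrite [tp _ _ _ _]linearZ /= linear_sum;
  rewrite exchange_big /=).
rewrite exchange_big /=.
rewrite [RHS](_ : _ = \sum_l sg (pij && p a) *: (sg (pij && p l) *:
    (if a == l then T r i j (tp N l b v) else 0))); last first.
  rewrite (bigD1 a) //= eqxx scalerA sgnK scale1r big1 ?addr0 // => l /negbTE.
  by rewrite eq_sym => ->; rewrite !scaler0.
apply: eq_bigr => l _; rewrite -(tprime_tc_inv_conv N a l (fun q => T r i j (tp q l b v))).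
under eq_bigr do under eq_bigr do rewrite scalerA.
under eq_bigr do rewrite -scaler_sumr.
rewrite -scaler_sumr scalerA; congr (_ *: _).
by rewrite exchange_big /=; apply: eq_bigr => n1 _; rewrite exchange_big.
Qed.

Let rhs_rE r N k : rhs_r r N k =
  sg ((p i && p j) (+) (p i && p k) (+) (p j && p k)) *:
  (T r k j (if (N == 0%N) && (i == b) then v else 0) -
   \sum_(s < N.+1) T s k j (\sum_l T r i l (tp (N - s)%N l b v))).
Proof.
rewrite /rhs_r /rel_rhs; under eq_bigr do rewrite -scaler_sumr.
rewrite -scaler_sumr; congr (_ *: _); under eq_bigr do rewrite sumrB.
rewrite sumrB; congr (_ - _).
  rewrite -(tc_tprime_inv N i b v) linear_sum exchange_big /=.
  by apply: eq_bigr => s _; rewrite linear_sum.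
by rewrite exchange_big /=; apply: eq_bigr => s _; rewrite linear_sum.
Qed.

Let rhs_lrE r N : rhs_lr r N = (sg (pij && p a) * sg (p i && p j)) *:
  ((i == b)%:R *: \sum_k tp N a k (T r k j v) - (a == j)%:R *: \sum_l T r i l (tp N l b v)).
Proof.
rewrite /rhs_lr.
under eq_bigr do under eq_bigr do rewrite rhs_rE [tp _ _ _ _]linearZ /= scalerA linearB /= linear_sum.
under eq_bigr do under eq_bigr do rewrite /ck -mulrA sgn_cancel.
under eq_bigr do rewrite -scaler_sumr.
rewrite -scaler_sumr; congr (_ *: _); under eq_bigr do rewrite sumrB.
rewrite sumrB; congr (_ - _).
  rewrite scaler_sumr; apply: eq_bigr => k _.
  rewrite big_ord_recr /= subnn big1 ?add0r => [|n1 _]; last first.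
    by rewrite subn_eq0 leqNgt ltn_ord /= !linear0.
  by case: (i == b); rewrite ?scale1r ?scale0r ?linear0.
rewrite (_ : _ *: _ = if a == j then \sum_l T r i l (tp N l b v) else 0); last first.
  by case: (a == j); rewrite ?scale1r ?scale0r.
rewrite -(tprime_tc_inv_conv N a j (fun q => \sum_l T r i l (tp q l b v))).
by rewrite exchange_big /=; apply: eq_bigr => n1 _; rewrite exchange_big.
Qed.

(* the commutation relation between t_ij(u) and t'_ab(v), multiplied by u - v *)
Lemma tc_tprime_comm r n :
  let c := sg (pij && p a) * sg (pij && p b) in
  (c *: tp n a b (T r.+1 i j v) - T r.+1 i j (tp n a b v))
  - (c *: tp n.+1 a b (T r i j v) - T r i j (tp n.+1 a b v))
  = (sg (pij && p a) * sg (p i && p j)) *: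
    ((i == b)%:R *: \sum_k tp n a k (T r k j v) - (a == j)%:R *: \sum_l T r i l (tp n l b v)).
Proof. by have := comm_lr_rec r n; rewrite !comm_lrE rhs_lrE. Qed.

End CommutationRelation.

Section HighestWeight.
Variables (xi : M) (lam : 'I_kappa -> ps K).
Hypothesis xi_hw : is_highest_weight t xi lam.

Lemma lam_coef0 a : lam a 0%N = 1.
Proof. by case: xi_hw. Qed.

Lemma tc_xi_upper r (a b : 'I_kappa) : (a < b)%N -> T r a b xi = 0.
Proof.
move=> ltab; case: r => [|r] /=; last by case: xi_hw => _ _ ->.
by case: eqP => // eab; move: ltab; rewrite eab ltnn.
Qed.

Lemma tc_xi_diag r a : T r a a xi = lam a r *: xi.
Proof.
case: r => [|r] /=; last by case: xi_hw => _ _ _ ->.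
by rewrite eqxx lam_coef0 scale1r.
Qed.

(* coefficients of (T(v)^{-1} T(u))_{ab} xi *)
Let tprime_tc_xi n r (a b : 'I_kappa) := \sum_m tp n a m (T r m b xi).

Let tprime_tc_xi0 n a b : tprime_tc_xi n 0 a b = tp n a b xi.
Proof.
rewrite /tprime_tc_xi (eq_bigr (fun m => if m == b then tp n a m xi else 0)) ?sum_if_eqr //.
by move=> m _ /=; case: (m == b); rewrite ?linear0.
Qed.

Section UpperVanishingStep.
Variable N : nat.
Hypothesis tprime_xi_lt : forall n, (n < N)%N -> forall a b : 'I_kappa, (a < b)%N -> tp n a b xi = 0.
Hypothesis tprime_tc_xi_lt : forall n r (a b : 'I_kappa),
  (n + r < N)%N -> (a < b)%N -> tprime_tc_xi n r a b = 0.

(* induction on r through the commutation relation, whose right side is a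
   coefficient of (T^{-1} T)_{ab} xi of lower total degree *)
Let tprime_tc_xi_above (a b m : 'I_kappa) : (a < b)%N -> (b < m)%N ->
  forall r, (r <= N)%N -> tp (N - r) a m (T r m b xi) = 0.
Proof.
move=> ltab ltbm; have ltam := ltn_trans ltab ltbm.
have neq_mb : m != b by rewrite neq_ltn ltbm orbT.
elim=> [_|r IHr le_rN]; first by rewrite /= (negbTE neq_mb) linear0.
have := tc_tprime_comm a m m b xi r (N - r.+1)%N.
have lt_N : (N - r.+1 < N)%N by lia.
rewrite /= tprime_xi_lt ?linear0 //.
rewrite (_ : (N - r.+1).+1 = N - r)%N; last by lia.
rewrite IHr ?scaler0; last by lia.
have -> : T r m b (tp (N - r) a m xi) = 0.
  case: r IHr le_rN lt_N => [|r] _ le_rN _ /=; first by rewrite (negbTE neq_mb).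
  by rewrite tprime_xi_lt ?linear0 //; lia.
rewrite eqxx scale1r (_ : (a == b) = false) ?scale0r ?subr0; last first.
  by apply/negbTE; rewrite neq_ltn ltab.
rewrite -/(tprime_tc_xi (N - r.+1) r a b) tprime_tc_xi_lt ?scaler0 ?subrr ?subr0; [|lia|by []].
by rewrite addr0 => /eqP; rewrite scaler_eq0 mulf_eq0 !(negbTE (sgn_neq0 _ _)) => /eqP.
Qed.

Lemma tprime_tc_xi_eq0 n r (a b : 'I_kappa) : (a < b)%N -> (n + r)%N = N -> (0 < r)%N ->
  tprime_tc_xi n r a b = 0.
Proof.
move=> ltab nrN r_gt0; rewrite /tprime_tc_xi big1 // => m _.
case: (ltngtP m b) => [ltmb|ltbm|/val_inj ->].
- by rewrite tc_xi_upper ?linear0.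
- by rewrite (_ : n = N - r)%N ?tprime_tc_xi_above //; lia.
- by rewrite tc_xi_diag linearZ /= tprime_xi_lt ?scaler0 //; lia.
Qed.

Lemma tprime_xi_upper_step (a b : 'I_kappa) : (a < b)%N -> tp N a b xi = 0.
Proof.
move=> ltab; have neq_ab : (a == b) = false by apply/negbTE; rewrite neq_ltn ltab.
have := tprime_tc_inv N a b xi; rewrite neq_ab andbF big_ord_recr /= subnn big1 ?add0r.
  by rewrite -/(tprime_tc_xi N 0 a b) tprime_tc_xi0.
by move=> s _; apply: (tprime_tc_xi_eq0 (r := (N - s)%N)) => //; have := ltn_ord s; lia.
Qed.

End UpperVanishingStep.

Lemma tprime_xi_upper N (a b : 'I_kappa) : (a < b)%N -> tp N a b xi = 0.
Proof.
suff [] : (forall a b : 'I_kappa, (a < b)%N -> tp N a b xi = 0) /\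
    (forall n r (a b : 'I_kappa), (n + r)%N = N -> (a < b)%N -> tprime_tc_xi n r a b = 0).
  by move=> H _; apply: H.
elim/ltn_ind: N {a b} => N IH.
have tprime_xi_lt n : (n < N)%N -> forall a b : 'I_kappa, (a < b)%N -> tp n a b xi = 0.
  by move=> /IH [].
have tprime_tc_xi_lt n r (a b : 'I_kappa) :
    (n + r < N)%N -> (a < b)%N -> tprime_tc_xi n r a b = 0.
  by move=> /IH [_ H]; apply: H.
split=> [a b|n [|r] a b nrN ltab]; first exact: tprime_xi_upper_step.
  by rewrite tprime_tc_xi0 -[n]addn0 nrN; apply: tprime_xi_upper_step.
by apply: (tprime_tc_xi_eq0 tprime_xi_lt tprime_tc_xi_lt).
Qed.

Section DiagonalStep.
Variables (i f : 'I_kappa).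
Hypothesis fE : f = i.+1 :> nat.
Let c := rho K p i.+1.

(* coefficients of (T(u) T(v)^{-1})_{aa} xi *)
Let tc_tprime_xi (a : 'I_kappa) r n := \sum_l T r a l (tp n l a xi).

Let tail_sum r n := \sum_(j : 'I_kappa | (i < j)%N) sg (p j) *: \sum_k tp n j k (T r k j xi).

Let tail_comm (b : 'I_kappa) r n := \sum_(j : 'I_kappa | (i < j)%N)
  ((sg ((p b (+) p j) && p j) * sg ((p b (+) p j) && p b)) *: tp n j b (T r b j xi)
   - T r b j (tp n j b xi)).

Let tail_comm_rec b r n :
  tail_comm b r.+1 n - tail_comm b r n.+1 = tail_sum r n - c *: tc_tprime_xi b r n.
Proof.
rewrite /tail_comm /tail_sum /c /rho -sumrB scaler_suml -sumrB.
apply: eq_bigr => j _; rewrite tc_tprime_comm !eqxx !scale1r scalerBr.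
by rewrite sgn_add; congr (sg _ *: _ - _); case: (p b); case: (p j).
Qed.

Let tail_comm_i r n : tail_comm i r n = T r i i (tp n i i xi) - tc_tprime_xi i r n.
Proof.
rewrite /tail_comm sumrB big1 ?sub0r => [|j ltij]; last by rewrite tc_xi_upper ?linear0 ?scaler0.
rewrite /tc_tprime_xi [X in _ = _ - X](bigD1 i) //=.
rewrite [X in _ = _ - (_ + X)](bigID (fun l : 'I_kappa => (i < l)%N)) /=.
rewrite [X in _ = _ - (_ + (_ + X))]big1 ?addr0 => [|l /andP [neq_li]]; last first.
  rewrite -leqNgt leq_eqVlt (negbTE (neq_li : (l != i :> nat))) /= => /tprime_xi_upper ->.
  by rewrite linear0.
rewrite opprD addrA subrr sub0r; congr (- _); apply: eq_bigl => l.
by rewrite andbC; case: (ltngtP i l) => // ltil; rewrite eq_sym -val_eqE /= neq_ltn ltil.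
Qed.

Let tail_comm_f r n : tail_comm f r n = lam f r *: tp n f f xi - tc_tprime_xi f r n.
Proof.
rewrite /tail_comm sumrB; congr (_ - _).
  rewrite (bigD1 f) /= ?fE // big1 ?addr0 => [|j /andP [ltij neq_jf]].
    by rewrite addbb /= /sgn expr0 mulr1 scale1r tc_xi_diag linearZ.
  rewrite tc_xi_upper ?linear0 ?scaler0 //.
  by rewrite ltn_neqAle eq_sym (neq_jf : (j != f :> nat)) fE.
rewrite /tc_tprime_xi [RHS](bigID (fun l : 'I_kappa => (i < l)%N)) /=.
rewrite [X in _ = _ + X]big1 ?addr0 // => l; rewrite -leqNgt => le_li.
by rewrite tprime_xi_upper ?linear0 // fE ltnS.
Qed.

Let D r n := tc_tprime_xi i r n - tc_tprime_xi f r n.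
Let E r n := T r i i (tp n i i xi) - lam f r *: tp n f f xi.

Let DE_rec r n : (D r.+1 n - E r.+1 n) - (D r n.+1 - E r n.+1) = c *: D r n.
Proof.
have DE r' n' : D r' n' - E r' n' = tail_comm f r' n' - tail_comm i r' n'.
  by rewrite tail_comm_i tail_comm_f /D /E !opprB !addrA (addrAC (tc_tprime_xi i _ _))
    (addrAC (lam f _ *: _)) (addrC (tc_tprime_xi i _ _)).
by rewrite !DE subrACB !tail_comm_rec opprB addrC subrKA scalerBr.
Qed.

Let DE_0n n : D 0 n = E 0 n.
Proof. by rewrite /D /E /tc_tprime_xi /= !sum_if_eql /= eqxx lam_coef0 scale1r. Qed.

Let DE_r0 r : D r 0 = E r 0.
Proof.
have tc_tprime_xi0 a : tc_tprime_xi a r 0 = T r a a xi.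
  rewrite /tc_tprime_xi (eq_bigr (fun l => if l == a then T r a l xi else 0)) ?sum_if_eqr //.
  by move=> l _; rewrite tprime0; case: (l == a); rewrite ?linear0.
by rewrite /D /E !tc_tprime_xi0 !tprime0 !eqxx (tc_xi_diag r f).
Qed.

Let D_diag N : \sum_(r < N.+1) D r (N - r)%N = 0.
Proof. by rewrite /D sumrB /tc_tprime_xi !tc_tprime_inv !eqxx subrr. Qed.

Lemma tprime_xi_diag_step :
  (forall n, tp n f f xi = lam_prime p lam f n *: xi) ->
  forall n, tp n i i xi = lam_prime p lam i n *: xi.
Proof.
move=> tprime_f n; rewrite (lam_primeS p lam fE) -/c.
have subst_E0 := subst_shift_eq0 DE_rec DE_0n DE_r0 D_diag.
pose A m v := \sum_(r < m.+1) shift_coef c m r *: T r i i v.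
have A_linear m : linear (A m).
  move=> a v w; rewrite /A scaler_sumr -big_split; apply: eq_bigr => r _.
  by rewrite linearP !scalerDr !scalerA mulrC.
apply: (conv_solve_eigen A_linear (g := fun s => tp s i i xi)).
- by move=> v; rewrite /A big_ord1 /shift_coef subnn expr0 bin0 mulr1 /= eqxx scale1r.
- move=> m; rewrite /A ps_shiftE scaler_suml; apply: eq_bigr => r _.
  by rewrite tc_xi_diag scalerA mulrC.
- by rewrite ps_shift_coef0 lam_coef0.
move=> N; have /eqP := subst_E0 N; rewrite /subst_shift /E.
under eq_bigr do (under eq_bigr do rewrite scalerBr; rewrite sumrB).
rewrite sumrB subr_eq0 => /eqP ->.
rewrite /ps_mul (sum_ord_rev N (fun u w => ps_shift c (lam f) u * lam_prime p lam f w)).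
rewrite scaler_suml; apply: eq_bigr => s _.
under eq_bigr do rewrite scalerA.
rewrite -scaler_suml tprime_f scalerA ps_shiftE; congr ((_ * _) *: _).
by apply: eq_bigr => r _; rewrite [shift_coef _ _ _ * _]mulrC.
Qed.

End DiagonalStep.

Lemma tprime_xi_diag_last (i : 'I_kappa) : i.+1 = kappa ->
  forall n, tp n i i xi = lam_prime p lam i n *: xi.
Proof.
move=> iE n; rewrite lam_prime_last //.
have lam_linear m : linear (fun v : M => lam i m *: v).
  by move=> a v w; rewrite scalerDr !scalerA mulrC.
rewrite -[ps_inv _](ps_mulr1 _); apply: (conv_solve_eigen lam_linear (g := fun s => tp s i i xi)) => //.
- by move=> v; rewrite lam_coef0 scale1r.
- exact: lam_coef0.
move=> N; have := tprime_tc_inv N i i xi; rewrite eqxx andbT /ps_one.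
rewrite (_ : (if _ then xi else 0) = (N == 0%N)%:R *: xi) => [<-|]; last first.
  by case: (N == 0%N); rewrite ?scale1r ?scale0r.
apply: eq_bigr => s _; rewrite (bigD1 i) //= big1 ?addr0 => [|k neq_ki].
  by rewrite tc_xi_diag [RHS]linearZ.
rewrite tc_xi_upper ?linear0 // ltn_neqAle -ltnS iE ltn_ord andbT.
by move: neq_ki; rewrite -val_eqE.
Qed.

Lemma tprime_xi_diag (i : 'I_kappa) n : tp n i i xi = lam_prime p lam i n *: xi.
Proof.
move: {2}(kappa - i.+1)%N (erefl (kappa - i.+1)%N) n => d.
elim: d i => [|d IH] i dE.
  by apply: tprime_xi_diag_last; have := ltn_ord i; lia.
have ltik : (i.+1 < kappa)%N by lia.
apply: (tprime_xi_diag_step (f := Ordinal ltik)) => //.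
by apply: IH; rewrite /=; lia.
Qed.

End HighestWeight.
End Yangian.

Unset Implicit Arguments.
Set Strict Implicit.

Theorem proposition2p9 (m n : nat) (p : 'I_(m + n) -> bool)
    (hp : #|[set i | ~~ p i]| = m)
    (M : lmodType C) (t : nat -> 'I_(m + n) -> 'I_(m + n) -> M -> M)
    (ht : is_rep p t)
    (xi : M) (lam : 'I_(m + n) -> ps C)
    (hxi : is_highest_weight t xi lam) :
  forall (i : 'I_(m + n)) (r : nat),
    tprime p t r i i xi = lam_prime p lam i r *: xi.
Proof.
by move=> i r; apply: (tprime_xi_diag ht hxi).
Qed.
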